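(* Let $K_1=\overline{1}$ and, for $j\ge1$, let $K_{j+1}$ be the periodic sequence whose repeating block is obtained by writing the repeating block of $K_j$ twice and replacing the last symbol by its complement. For $s=s_1s_2\dots\in\{0,1\}^{\mathbb N}$ let $\tau(s)=\sum_{k\ge1}t_k2^{-k}$ with $t_k=\sum_{i=1}^k s_i\pmod 2$, and put $\tau_j=\tau(K_j)$. Then for every $j\ge1$, $$\tau_{j+1}-\tau_j=\frac{2}{2^{2^j}+1}\,(1-\tau_j).$$ *)

From Stdlib Require Import Reals List Arith.
From Coquelicot Require Import Coquelicot.
Import ListNotations.
Open Scope R_scope.

Fixpoint blk (n : nat) : list bool :=
  match n with
  | O => [true]
  | S n' => let bb := blk n' ++ blk n' in
            removelast bb ++ [negb (last bb true)]
  end.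

Definition Kblock (j : nat) : list bool := blk (j - 1).

(* The periodic 0/1 sequence K_j, 0-indexed: K j i = s_{i+1}. *)
Definition K (j : nat) (i : nat) : bool :=
  nth (i mod length (Kblock j)) (Kblock j) false.

(* tpar s k = t_{k+1} = s_1 + ... + s_{k+1} mod 2 (s 0-indexed). *)
Fixpoint tpar (s : nat -> bool) (k : nat) : bool :=
  match k with
  | O => s O
  | S k' => xorb (tpar s k') (s k)
  end.

Definition b2R (b : bool) : R := if b then 1 else 0.

Definition tau (s : nat -> bool) : R :=
  Series (fun k => b2R (tpar s k) / 2 ^ (S k)).

From Stdlib Require Import Reals.
From Coquelicot Require Import Coquelicot.
From Stdlib Require Import List Arith Lia Lra.
Import ListNotations.
Open Scope R_scope.

(* Write j = n + 1, N = 2^n (the block length of K_j) and M = 2N = 2^j.  The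
   block of every K_j has an odd number of ones, so the parity sequence t of
   K_j satisfies t(k + N) = 1 - t(k), hence t(k + M) = t(k) and t(M - 1) = 0,
   while the parity sequence t' of K_{j+1} satisfies t'(k + M) = 1 - t'(k)
   and t'(M - 1) = 1.  Splitting off the first M binary digits gives
   tau_j = A + 2^-M tau_j and tau_{j+1} = A' + 2^-M (1 - tau_{j+1}).  As K_j
   and K_{j+1} agree on their first M - 1 symbols, t and t' agree before
   index M - 1, so A' = A + 2^-M; eliminating A gives the formula. *)

Lemma blk_snoc_double n :
  exists p x, blk n ++ blk n = p ++ [x] /\ blk (S n) = p ++ [negb x].
Proof.
  assert (Hne : blk n ++ blk n <> []).
  { intros E; apply app_eq_nil in E as [E _].
    destruct n; cbn [blk] in E; [discriminate|].
    apply app_eq_nil in E as [_ E]; discriminate. }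
  destruct (exists_last Hne) as (p & x & Hpx).
  exists p, x; split; [exact Hpx|].
  cbn [blk]; rewrite Hpx, removelast_last, last_last; reflexivity.
Qed.

Lemma blk_length n : length (blk n) = (2 ^ n)%nat.
Proof.
  induction n as [|n IH]; [reflexivity|].
  destruct (blk_snoc_double n) as (p & x & Hdbl & Hsucc).
  apply (f_equal (@length bool)) in Hdbl.
  rewrite Hsucc, !length_app, IH in *; cbn in *; lia.
Qed.

Lemma nth_mod_length_app_self {A} (l : list A) d i :
  (i < 2 * length l)%nat -> nth (i mod length l) l d = nth i (l ++ l) d.
Proof.
  intros Hi; destruct (Nat.lt_ge_cases i (length l)).
  - rewrite Nat.mod_small, app_nth1 by lia; reflexivity.
  - replace i with (i - length l + 1 * length l)%nat at 1 by lia.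
    rewrite Nat.Div0.mod_add, Nat.mod_small, app_nth2 by lia; reflexivity.
Qed.

Lemma K_succ_nth n i : K (S n) i = nth (i mod 2 ^ n) (blk n) false.
Proof. unfold K, Kblock; rewrite Nat.sub_succ, Nat.sub_0_r, blk_length; reflexivity. Qed.

Lemma K_periodic n i : K (S n) (i + 2 ^ n) = K (S n) i.
Proof.
  rewrite !K_succ_nth; replace (i + 2 ^ n)%nat with (i + 1 * 2 ^ n)%nat by lia.
  rewrite Nat.Div0.mod_add; reflexivity.
Qed.

Lemma K_succ_snoc n :
  exists p x, length p = pred (2 ^ S n) /\
    forall i, (i < 2 ^ S n)%nat ->
      K (S n) i = nth i (p ++ [x]) false /\ K (S (S n)) i = nth i (p ++ [negb x]) false.
Proof.
  destruct (blk_snoc_double n) as (p & x & Hdbl & Hsucc).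
  assert (Hlen : length (p ++ [x]) = (2 ^ S n)%nat).
  { rewrite <- Hdbl, length_app, blk_length; cbn; lia. }
  rewrite length_app in Hlen; cbn [length] in Hlen.
  exists p, x; split; [lia|]; intros i Hi; split.
  - rewrite K_succ_nth, <- blk_length, nth_mod_length_app_self, Hdbl
      by (rewrite blk_length; cbn in *; lia).
    reflexivity.
  - rewrite K_succ_nth, Nat.mod_small, Hsucc by lia; reflexivity.
Qed.

Lemma K_succ_agree n i : (i < pred (2 ^ S n))%nat -> K (S (S n)) i = K (S n) i.
Proof.
  intros Hi; destruct (K_succ_snoc n) as (p & x & Hp & HK).
  destruct (HK i ltac:(lia)) as [-> ->]; rewrite !app_nth1 by lia; reflexivity.
Qed.

Lemma K_succ_flip n : K (S (S n)) (pred (2 ^ S n)) = negb (K (S n) (pred (2 ^ S n))).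
Proof.
  destruct (K_succ_snoc n) as (p & x & Hp & HK).
  assert (H2 : (0 < 2 ^ S n)%nat) by (apply Nat.neq_0_lt_0, Nat.pow_nonzero; lia).
  destruct (HK (pred (2 ^ S n)) ltac:(lia)) as [-> ->].
  rewrite <- Hp, !nth_middle; reflexivity.
Qed.

Lemma tpar_ext_le s s' k :
  (forall i, (i <= k)%nat -> s i = s' i) -> tpar s k = tpar s' k.
Proof.
  induction k as [|k IH]; intros Hs; cbn [tpar].
  - apply Hs; lia.
  - rewrite IH by (intros i Hi; apply Hs; lia).
    rewrite Hs by lia; reflexivity.
Qed.

Lemma tpar_flip s s' k :
  (forall i, (i < k)%nat -> s' i = s i) -> s' k = negb (s k) ->
  tpar s' k = negb (tpar s k).
Proof.
  intros Hlt Hk; destruct k as [|k]; cbn [tpar]; [exact Hk|].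
  rewrite (tpar_ext_le s' s k) by (intros; apply Hlt; lia).
  rewrite Hk; destruct (tpar s k), (s (S k)); reflexivity.
Qed.

Lemma tpar_shift s M :
  (0 < M)%nat -> (forall i, s (i + M)%nat = s i) ->
  forall k, tpar s (k + M) = xorb (tpar s (pred M)) (tpar s k).
Proof.
  intros HM Hs; destruct M as [|m]; [lia|]; cbn [pred].
  induction k as [|k IH].
  - cbn [tpar Nat.add]; rewrite <- (Hs 0%nat); reflexivity.
  - cbn [tpar Nat.add]; rewrite IH, <- (Hs (S k)); cbn [Nat.add].
    destruct (tpar s m), (tpar s k), (s (S (k + S m))); reflexivity.
Qed.

Lemma tpar_K_double n (Hodd : tpar (K (S n)) (pred (2 ^ n)) = true) :
  tpar (K (S n)) (pred (2 ^ S n)) = false.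
Proof.
  assert (H2 : (0 < 2 ^ n)%nat) by (apply Nat.neq_0_lt_0, Nat.pow_nonzero; lia).
  replace (pred (2 ^ S n)) with (pred (2 ^ n) + 2 ^ n)%nat by (cbn; lia).
  rewrite tpar_shift, Hodd by (apply K_periodic || lia); reflexivity.
Qed.

Lemma tpar_K_block n : tpar (K (S n)) (pred (2 ^ n)) = true.
Proof.
  induction n as [|n IH]; [reflexivity|].
  rewrite (tpar_flip (K (S n))); [| exact (K_succ_agree n) | apply K_succ_flip].
  rewrite tpar_K_double by exact IH; reflexivity.
Qed.

Definition bin_term (t : nat -> bool) (k : nat) : R := b2R (t k) / 2 ^ S k.

Lemma is_series_inv_pow2 : is_series (fun k => / 2 ^ S k) 1.
Proof.
  assert (Hgeom : is_series (fun k => (/ 2) ^ k * / 2) (/ (1 - / 2) * / 2)).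
  { apply is_series_scal_r, is_series_geom; rewrite Rabs_pos_eq; lra. }
  replace 1 with (/ (1 - / 2) * / 2) by field.
  eapply is_series_ext; [| exact Hgeom].
  intros k; cbn [pow]; rewrite pow_inv, Rinv_mult; apply Rmult_comm.
Qed.

Lemma ex_series_bin_term t : ex_series (bin_term t).
Proof.
  apply (ex_series_le (bin_term t) (fun k => / 2 ^ S k));
    [| eexists; apply is_series_inv_pow2].
  intros k; change (norm (bin_term t k)) with (Rabs (bin_term t k)); unfold bin_term.
  assert (0 < / 2 ^ S k) by (apply Rinv_0_lt_compat, pow_lt; lra).
  destruct (t k); cbn [b2R]; unfold Rdiv.
  - rewrite Rmult_1_l, Rabs_pos_eq; lra.
  - rewrite Rmult_0_l, Rabs_R0; lra.
Qed.

Lemma Series_bin_term_shift t M e :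
  (0 < M)%nat -> (forall k, t (k + M)%nat = xorb e (t k)) ->
  Series (bin_term t) = sum_f_R0 (bin_term t) (pred M)
    + / 2 ^ M * (if e then 1 - Series (bin_term t) else Series (bin_term t)).
Proof.
  intros HM Ht.
  rewrite (Series_incr_n _ M) at 1 by (exact HM || apply ex_series_bin_term).
  f_equal.
  rewrite (Series_ext _ (fun k => / 2 ^ M *
             (if e then / 2 ^ S k - bin_term t k else bin_term t k))).
  - rewrite Series_scal_l; f_equal; destruct e; [|reflexivity].
    rewrite Series_minus, (is_series_unique _ _ is_series_inv_pow2);
      [reflexivity | eexists; apply is_series_inv_pow2 | apply ex_series_bin_term].
  - intros k; unfold bin_term; rewrite Nat.add_comm, Ht.
    replace (S (k + M)) with (M + S k)%nat by lia; rewrite pow_add.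
    assert (2 ^ M <> 0) by (apply pow_nonzero; lra).
    assert (2 ^ S k <> 0) by (apply pow_nonzero; lra).
    destruct e, (t k); cbn [b2R xorb negb]; field; auto.
Qed.

Lemma sum_bin_term_flip t t' m :
  (forall k, (k < m)%nat -> t' k = t k) -> t m = false -> t' m = true ->
  sum_f_R0 (bin_term t') m = sum_f_R0 (bin_term t) m + / 2 ^ S m.
Proof.
  intros Hlt Htm Ht'm.
  assert (Hlast : bin_term t' m = bin_term t m + / 2 ^ S m).
  { unfold bin_term; rewrite Htm, Ht'm; cbn [b2R]; field; apply pow_nonzero; lra. }
  destruct m as [|m]; cbn [sum_f_R0]; [exact Hlast|].
  rewrite Hlast, (sum_eq (bin_term t') (bin_term t)); [ring|].
  intros i Hi; unfold bin_term; rewrite Hlt by lia; reflexivity.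
Qed.

Lemma eliminate_common_prefix A T U P :
  0 < P -> T = A + / P * T -> U = A + / P + / P * (1 - U) ->
  U - T = 2 / (P + 1) * (1 - T).
Proof.
  intros HP HT HU.
  assert (HUT : (U - T) * P = 2 - U - T).
  { rewrite HU at 1; rewrite HT at 1; field; lra. }
  apply Rmult_eq_reg_r with (P + 1); [| lra].
  transitivity (2 * (1 - T)); [nra | field; lra].
Qed.

Theorem mainTheorem6 (j : nat) (hj : (1 <= j)%nat) :
  tau (K (S j)) - tau (K j) = 2 / (2 ^ (2 ^ j)%nat + 1) * (1 - tau (K j)).
Proof.
  destruct j as [|n]; [lia|]; clear hj.
  change (tau ?s) with (Series (bin_term (tpar s))).
  set (M := (2 ^ S n)%nat).
  assert (HM : (0 < M)%nat) by (apply Nat.neq_0_lt_0, Nat.pow_nonzero; lia).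
  assert (Hs_per : forall i, K (S n) (i + M) = K (S n) i).
  { intros i; replace (i + M)%nat with (i + 2 ^ n + 2 ^ n)%nat by (unfold M; cbn; lia).
    rewrite !K_periodic; reflexivity. }
  assert (Hs_end : tpar (K (S n)) (pred M) = false)
    by apply tpar_K_double, tpar_K_block.
  assert (Hu_end : tpar (K (S (S n))) (pred M) = true) by apply tpar_K_block.
  pose proof (Series_bin_term_shift _ _ _ HM (tpar_shift _ _ HM Hs_per)) as HT.
  pose proof (Series_bin_term_shift _ _ _ HM (tpar_shift _ _ HM (K_periodic (S n)))) as HU.
  rewrite Hs_end in HT; rewrite Hu_end in HU.
  assert (Hagree : forall k, (k < pred M)%nat -> tpar (K (S (S n))) k = tpar (K (S n)) k).
  { intros k Hk; apply tpar_ext_le; intros i Hi; apply K_succ_agree; unfold M in *; lia. }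
  rewrite (sum_bin_term_flip _ _ _ Hagree Hs_end Hu_end), Nat.succ_pred_pos in HU
    by exact HM.
  exact (eliminate_common_prefix _ _ _ _ (pow_lt 2 M ltac:(lra)) HT HU).
Qed.
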